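(* Let $\psi\in C^2((0,\infty))$ be concave with $\psi''(1)\neq0\neq\psi'(1)$, let $d>0$, and let $G=(V,E)$ be a finite graph satisfying $CD\psi(d,0)$. Then $G$ satisfies $CD\!\left(\frac{-\psi''(1)}{\psi'(1)^2}\,d,\,0\right)$.
   Context: A finite graph $G=(V,E)$: finite set $V$, irreflexive symmetric relation $E$; $v\sim w$ iff $(v,w)\in E$. $C(V)$: real functions on $V$; $C^+(V)$: positive ones. Laplacian $\Delta f(v)=\sum_{w\sim v}(f(w)-f(v))$. $\Gamma(f,g):=\frac12(\Delta(fg)-f\Delta g-g\Delta f)$, $\Gamma(f)=\Gamma(f,f)$, $\Gamma_2(f):=\frac12(\Delta\Gamma(f)-2\Gamma(f,\Delta f))$. $G$ satisfies $CD(d,0)$ if $\Gamma_2(f)\ge\frac1d(\Delta f)^2$ for all $f\in C(V)$. For $f\in C^+(V)$: $(\Delta^\psi f)(v):=\Delta\big[\psi\big(\tfrac{f}{f(v)}\big)\big](v)$; $(\Omega^\psi f)(v):=\Delta\Big[\psi'\big(\tfrac{f}{f(v)}\big)\cdot\tfrac{f}{f(v)}\cdot\big(\tfrac{\Delta f}{f}-\tfrac{(\Delta f)(v)}{f(v)}\big)\Big](v)$; $2\Gamma_2^\psi(f):=\Omega^\psi f+\frac{\Delta f\,\Delta^\psi f}{f}-\frac{\Delta(f\,\Delta^\psi f)}{f}$. $G$ satisfies $CD\psi(d,0)$ if $\Gamma_2^\psi(f)\ge\frac1d(\Delta^\psi f)^2$ for all $f\in C^+(V)$. *)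

From Stdlib Require Import Reals Lra List.
Open Scope R_scope.

(* A finite graph: vertex set V = {0,...,nV-1}, edge relation adj
   (irreflexive and symmetric on V).  Functions on V are nat -> R
   (values outside V are irrelevant). *)
Record graph := {
  nV : nat;
  adj : nat -> nat -> bool;
  adj_irrefl : forall v, (v < nV)%nat -> adj v v = false;
  adj_sym : forall v w, (v < nV)%nat -> (w < nV)%nat -> adj v w = adj w v
}.

Definition sumV (G : graph) (F : nat -> R) : R :=
  fold_right (fun w acc => F w + acc) 0 (seq 0 (nV G)).

Definition Lap (G : graph) (f : nat -> R) (v : nat) : R :=
  sumV G (fun w => if adj G v w then f w - f v else 0).

Definition Gam (G : graph) (f g : nat -> R) (v : nat) : R :=
  / 2 * (Lap G (fun w => f w * g w) v - f v * Lap G g v - g v * Lap G f v).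

Definition Gam1 (G : graph) (f : nat -> R) : nat -> R := Gam G f f.

Definition Gamma2 (G : graph) (f : nat -> R) (v : nat) : R :=
  / 2 * (Lap G (Gam1 G f) v - 2 * Gam G f (Lap G f) v).

Definition CD (G : graph) (d : R) : Prop :=
  forall (f : nat -> R) (v : nat), (v < nV G)%nat ->
    Gamma2 G f v >= / d * (Lap G f v) ^ 2.

Definition Lappsi (G : graph) (psi : R -> R) (f : nat -> R) (v : nat) : R :=
  Lap G (fun w => psi (f w / f v)) v.

Definition Omegapsi (G : graph) (dpsi : R -> R) (f : nat -> R) (v : nat) : R :=
  Lap G (fun w => dpsi (f w / f v) * (f w / f v) *
                  (Lap G f w / f w - Lap G f v / f v)) v.

Definition Gamma2psi (G : graph) (psi dpsi : R -> R) (f : nat -> R) (v : nat) : R :=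
  / 2 * (Omegapsi G dpsi f v
         + Lap G f v * Lappsi G psi f v / f v
         - Lap G (fun w => f w * Lappsi G psi f w) v / f v).

Definition CDpsi (G : graph) (psi dpsi : R -> R) (d : R) : Prop :=
  forall f : nat -> R, (forall w, (w < nV G)%nat -> 0 < f w) ->
  forall v, (v < nV G)%nat ->
    Gamma2psi G psi dpsi f v >= / d * (Lappsi G psi f v) ^ 2.

Definition C2_pos (psi dpsi ddpsi : R -> R) : Prop :=
  (forall x, 0 < x -> derivable_pt_lim psi x (dpsi x)) /\
  (forall x, 0 < x -> derivable_pt_lim dpsi x (ddpsi x)) /\
  (forall x, 0 < x -> continuity_pt ddpsi x).

Definition concave_pos (psi : R -> R) : Prop :=
  forall x y t, 0 < x -> 0 < y -> 0 <= t <= 1 ->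
    t * psi x + (1 - t) * psi y <= psi (t * x + (1 - t) * y).

From Stdlib Require Import Reals Lra Lia List.
Open Scope R_scope.

(* Test the curvature condition on perturbations of the constant function, f_e = 1 + e g.
   Expanding in e, Lappsi f_e = e psi'(1) Lap g + O(e^2), while the first-order terms of
   Gamma_2^psi cancel and Gamma_2^psi f_e = - e^2 psi''(1) Gamma_2 g + o(e^2).  Dividing
   CDpsi(d,0) for f_e by e^2 and letting e -> 0 gives
   - psi''(1) Gamma_2 g >= (psi'(1) Lap g)^2 / d.  Concavity forces psi''(1) <= 0, hence
   psi''(1) < 0, and dividing by - psi''(1) yields CD. *)

Definition taylor2 (F : R -> R) (a b c : R) : Prop :=
  exists r : R -> R, exists del : R, 0 < del /\ continuity_pt r 0 /\ r 0 = 0 /\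
    forall e, Rabs e < del -> F e = a + b * e + c * e ^ 2 + e ^ 2 * r e.

Definition taylor1 (F : R -> R) (a b : R) : Prop :=
  exists r : R -> R, exists del : R, 0 < del /\ continuity_pt r 0 /\ r 0 = 0 /\
    forall e, Rabs e < del -> F e = a + b * e + e * r e.

Ltac solve_continuity := repeat first [ assumption
  | apply continuity_pt_plus | apply continuity_pt_minus | apply continuity_pt_mult
  | apply continuity_pt_opp
  | (apply continuity_pt_const; intros ? ?; reflexivity)
  | apply derivable_continuous_pt, derivable_pt_id ].

Lemma continuity_pt_zero_small (r : R -> R) : continuity_pt r 0 -> r 0 = 0 ->
  forall eps, 0 < eps -> exists del, 0 < del /\ forall x, Rabs x < del -> Rabs (r x) < eps.
Proof.
  intros Hc H0 eps He. destruct (Hc eps He) as [del [Hdel Hx]].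
  exists del; split; [lra|]. intros x Hxd.
  destruct (Req_dec x 0) as [->|Hn]; [rewrite H0, Rabs_R0; lra|].
  specialize (Hx x). simpl in Hx. unfold R_dist in Hx. rewrite H0, !Rminus_0_r in Hx.
  apply Hx. split; [split; [exact I|auto] | exact Hxd].
Qed.

Lemma continuity_pt_zero_intro (r : R -> R) : r 0 = 0 ->
  (forall eps, 0 < eps -> exists del, 0 < del /\
     forall x, x <> 0 -> Rabs x < del -> Rabs (r x) < eps) ->
  continuity_pt r 0.
Proof.
  intros H0 H eps He. destruct (H eps He) as [del [Hdel Hx]].
  exists del; split; [lra|]. intros x [[_ Hn] Hxd]. simpl in *. unfold R_dist in *.
  rewrite H0, !Rminus_0_r in *. apply Hx; auto.
Qed.

Lemma taylor2_ext F G a b c a' b' c' : taylor2 F a b c -> (forall e, F e = G e) ->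
  a = a' -> b = b' -> c = c' -> taylor2 G a' b' c'.
Proof.
  intros [r [del [Hdel [Hr [Hr0 HF]]]]] HFG -> -> ->.
  exists r, del; repeat split; auto. intros e He; rewrite <- HFG; auto.
Qed.

Lemma taylor1_ext F G a b a' b' : taylor1 F a b -> (forall e, F e = G e) ->
  a = a' -> b = b' -> taylor1 G a' b'.
Proof.
  intros [r [del [Hdel [Hr [Hr0 HF]]]]] HFG -> ->.
  exists r, del; repeat split; auto. intros e He; rewrite <- HFG; auto.
Qed.

Lemma taylor2_poly a b c : taylor2 (fun e => a + b * e + c * e ^ 2) a b c.
Proof. exists (fun _ => 0), 1; repeat split; try lra; [solve_continuity | intros; ring]. Qed.

Lemma taylor2_const c : taylor2 (fun _ => c) c 0 0.
Proof.
  eapply taylor2_ext; [apply (taylor2_poly c 0 0) | intros; cbv beta; ring | reflexivity ..].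
Qed.

Lemma taylor2_plus F G a b c a' b' c' : taylor2 F a b c -> taylor2 G a' b' c' ->
  taylor2 (fun e => F e + G e) (a + a') (b + b') (c + c').
Proof.
  intros [r1 [d1 [Hd1 [Hr1 [H01 H1]]]]] [r2 [d2 [Hd2 [Hr2 [H02 H2]]]]].
  exists (fun e => r1 e + r2 e), (Rmin d1 d2); repeat split.
  - apply Rmin_pos; auto.
  - solve_continuity.
  - rewrite H01, H02; ring.
  - intros e He. apply Rmin_Rgt_l in He as [He1 He2].
    rewrite H1, H2 by auto. ring.
Qed.

Lemma taylor2_scal k F a b c : taylor2 F a b c ->
  taylor2 (fun e => k * F e) (k * a) (k * b) (k * c).
Proof.
  intros [r [del [Hdel [Hr [Hr0 HF]]]]].
  exists (fun e => k * r e), del; repeat split; auto.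
  - solve_continuity.
  - rewrite Hr0; ring.
  - intros e He. rewrite HF by auto. ring.
Qed.

Lemma taylor2_minus F G a b c a' b' c' : taylor2 F a b c -> taylor2 G a' b' c' ->
  taylor2 (fun e => F e - G e) (a - a') (b - b') (c - c').
Proof.
  intros HF HG. eapply taylor2_ext.
  - exact (taylor2_plus _ _ _ _ _ _ _ _ HF (taylor2_scal (-1) _ _ _ _ HG)).
  - intros; cbv beta; ring.
  - ring.
  - ring.
  - ring.
Qed.

Lemma taylor2_mult F G a b c a' b' c' : taylor2 F a b c -> taylor2 G a' b' c' ->
  taylor2 (fun e => F e * G e) (a * a') (a * b' + b * a') (a * c' + b * b' + c * a').
Proof.
  intros [r1 [d1 [Hd1 [Hr1 [H01 H1]]]]] [r2 [d2 [Hd2 [Hr2 [H02 H2]]]]].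
  exists (fun e => e * (b * c' + c * b') + e * e * (c * c') + (a + b * e + c * (e * e)) * r2 e
             + (a' + b' * e + c' * (e * e)) * r1 e + e * e * (r1 e * r2 e)), (Rmin d1 d2).
  repeat split.
  - apply Rmin_pos; auto.
  - solve_continuity.
  - rewrite H01, H02; ring.
  - intros e He. apply Rmin_Rgt_l in He as [He1 He2].
    rewrite H1, H2 by auto. ring.
Qed.

Lemma taylor1_of_taylor2 F a b c : taylor2 F a b c -> taylor1 F a b.
Proof.
  intros [r [del [Hdel [Hr [Hr0 HF]]]]].
  exists (fun e => c * e + e * r e), del; repeat split; auto.
  - solve_continuity.
  - rewrite Hr0; ring.
  - intros e He. rewrite HF by auto. ring.
Qed.

Lemma taylor1_mult F G a b a' b' : taylor1 F a b -> taylor1 G a' b' ->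
  taylor1 (fun e => F e * G e) (a * a') (a * b' + b * a').
Proof.
  intros [r1 [d1 [Hd1 [Hr1 [H01 H1]]]]] [r2 [d2 [Hd2 [Hr2 [H02 H2]]]]].
  exists (fun e => b * b' * e + (a + b * e) * r2 e + (a' + b' * e) * r1 e + e * (r1 e * r2 e)),
    (Rmin d1 d2); repeat split.
  - apply Rmin_pos; auto.
  - solve_continuity.
  - rewrite H01, H02; ring.
  - intros e He. apply Rmin_Rgt_l in He as [He1 He2].
    rewrite H1, H2 by auto. ring.
Qed.

(* psi' is differentiable only once, so factors built from it have only first-order
   expansions; this suffices when the other factor vanishes at [0]. *)
Lemma taylor2_mult_taylor1 F G a b b' c' : taylor1 F a b -> taylor2 G 0 b' c' ->
  taylor2 (fun e => F e * G e) 0 (a * b') (a * c' + b * b').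
Proof.
  intros [r1 [d1 [Hd1 [Hr1 [H01 H1]]]]] [r2 [d2 [Hd2 [Hr2 [H02 H2]]]]].
  exists (fun e => a * r2 e + b * c' * e + b * e * r2 e + r1 e * (b' + c' * e + e * r2 e)),
    (Rmin d1 d2); repeat split.
  - apply Rmin_pos; auto.
  - solve_continuity.
  - rewrite H01, H02; ring.
  - intros e He. apply Rmin_Rgt_l in He as [He1 He2].
    rewrite H1, H2 by auto. ring.
Qed.

Lemma one_plus_mul_pos e x : Rabs e < / (Rabs x + 1) -> 0 < 1 + e * x.
Proof.
  intros He. pose proof (Rabs_pos x). pose proof (Rabs_pos e).
  assert (Hex : Rabs (e * x) < 1).
  { rewrite Rabs_mult.
    apply Rmult_lt_compat_r with (r := Rabs x + 1) in He; [|lra].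
    rewrite Rinv_l in He by lra. nra. }
  apply Rabs_def2 in Hex. lra.
Qed.

Lemma taylor2_inv_affine x : taylor2 (fun e => / (1 + e * x)) 1 (- x) (x ^ 2).
Proof.
  exists (fun e => - x ^ 3 * e / (1 + e * x)), (/ (Rabs x + 1)); repeat split.
  - apply Rinv_0_lt_compat. pose proof (Rabs_pos x). lra.
  - apply continuity_pt_div; [solve_continuity | solve_continuity | cbv beta; lra].
  - unfold Rdiv; ring.
  - intros e He. pose proof (one_plus_mul_pos e x He). field. lra.
Qed.

Lemma taylor2_comp phi R x0 A B C p q :
  taylor2 (fun x => phi (x0 + x)) A B C -> taylor2 R x0 p q ->
  taylor2 (fun e => phi (R e)) A (B * p) (B * q + C * p ^ 2).
Proof.
  intros [rho [dphi [Hdphi [Hrho [Hrho0 Hphi]]]]] [r [del [Hdel [Hr [Hr0 HR]]]]].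
  pose (s := fun e => p + q * e + e * r e).
  pose (X := fun e => e * s e).
  assert (HX : continuity_pt X 0) by (unfold X, s; solve_continuity).
  assert (HX0 : X 0 = 0) by (unfold X; ring).
  assert (HrhoX : continuity_pt (fun e => rho (X e)) 0).
  { change (continuity_pt (comp rho X) 0). apply continuity_pt_comp; auto. rewrite HX0; auto. }
  destruct (continuity_pt_zero_small X HX HX0 dphi Hdphi) as [al [Hal HXal]].
  exists (fun e => B * r e + C * (s e * s e - p * p) + s e * s e * rho (X e)), (Rmin del al).
  repeat split.
  - apply Rmin_pos; auto.
  - unfold s; solve_continuity.
  - cbv beta. rewrite HX0, Hrho0. unfold s. rewrite Hr0. ring.
  - intros e He. apply Rmin_Rgt_l in He as [He1 He2]. rewrite HR by auto.
    replace (x0 + p * e + q * e ^ 2 + e ^ 2 * r e) with (x0 + X e) by (unfold X, s; ring).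
    specialize (Hphi (X e) (HXal e He2)). cbv beta in Hphi.
    rewrite Hphi. unfold X, s. ring.
Qed.

Lemma taylor1_comp phi R x0 A B p :
  taylor1 (fun x => phi (x0 + x)) A B -> taylor1 R x0 p ->
  taylor1 (fun e => phi (R e)) A (B * p).
Proof.
  intros [sig [dphi [Hdphi [Hsig [Hsig0 Hphi]]]]] [r [del [Hdel [Hr [Hr0 HR]]]]].
  pose (s := fun e => p + r e).
  pose (X := fun e => e * s e).
  assert (HX : continuity_pt X 0) by (unfold X, s; solve_continuity).
  assert (HX0 : X 0 = 0) by (unfold X; ring).
  assert (HsigX : continuity_pt (fun e => sig (X e)) 0).
  { change (continuity_pt (comp sig X) 0). apply continuity_pt_comp; auto. rewrite HX0; auto. }
  destruct (continuity_pt_zero_small X HX HX0 dphi Hdphi) as [al [Hal HXal]].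
  exists (fun e => B * r e + s e * sig (X e)), (Rmin del al).
  repeat split.
  - apply Rmin_pos; auto.
  - unfold s; solve_continuity.
  - cbv beta. rewrite HX0, Hsig0, Hr0. ring.
  - intros e He. apply Rmin_Rgt_l in He as [He1 He2]. rewrite HR by auto.
    replace (x0 + p * e + e * r e) with (x0 + X e) by (unfold X, s; ring).
    specialize (Hphi (X e) (HXal e He2)). cbv beta in Hphi.
    rewrite Hphi. unfold X, s. ring.
Qed.

Lemma taylor2_leading_coef_nonneg h K : taylor2 h 0 0 K ->
  (exists del, 0 < del /\ forall e, Rabs e < del -> 0 <= h e) -> 0 <= K.
Proof.
  intros [r [d1 [Hd1 [Hr [Hr0 Hh]]]]] [d2 [Hd2 Hpos]].
  destruct (Rlt_or_le K 0) as [HK|HK]; [exfalso|exact HK].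
  destruct (continuity_pt_zero_small r Hr Hr0 (- K / 2) ltac:(lra)) as [al [Hal Hral]].
  set (e := Rmin (Rmin d1 d2) al / 2).
  assert (Hm : 0 < Rmin (Rmin d1 d2) al) by (repeat apply Rmin_pos; auto).
  assert (He : 0 < e) by (unfold e; lra).
  assert (Hlt : e < Rmin (Rmin d1 d2) al) by (unfold e; lra).
  apply Rmin_Rgt_l in Hlt as [Hlt Hlt3]. apply Rmin_Rgt_l in Hlt as [Hlt1 Hlt2].
  rewrite <- (Rabs_right e) in Hlt1, Hlt2, Hlt3 by lra.
  pose proof (Hpos e Hlt2) as Hhe. rewrite Hh in Hhe by auto.
  pose proof (Hral e Hlt3) as Hre. apply Rabs_def2 in Hre.
  assert (0 < e ^ 2) by (apply pow_lt; lra). nra.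
Qed.

Lemma Rabs_le_of_between x t : Rmin 0 x <= t <= Rmax 0 x -> Rabs t <= Rabs x.
Proof. unfold Rmin, Rmax. destruct (Rle_dec 0 x); intros; split_Rabs; lra. Qed.

(* Peano's form of the second-order remainder: by the mean value theorem it is
   controlled by the difference quotient of the derivative at [0]. *)
Lemma second_order_remainder_bound phi dphi c r : 0 < r ->
  (forall t, Rabs t < r -> derivable_pt_lim phi t (dphi t)) ->
  derivable_pt_lim dphi 0 c ->
  forall eps, 0 < eps -> exists del, 0 < del /\ forall x, Rabs x < del ->
    Rabs (phi x - (phi 0 + dphi 0 * x + c / 2 * x ^ 2)) <= eps * x ^ 2.
Proof.
  intros Hr Hphi Hdphi eps Heps.
  destruct (Hdphi eps Heps) as [del Hdel].
  exists (Rmin del r). split; [apply Rmin_pos; [apply cond_pos | lra]|].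
  intros x Hx. apply Rmin_Rgt_l in Hx as [Hxdel Hxr].
  set (f := fun s => phi s - (dphi 0 * s + c / 2 * (s * s))).
  set (f' := fun s => dphi s - dphi 0 - c * s).
  assert (Hf' : forall t, Rabs t <= Rabs x -> Rabs (f' t) <= eps * Rabs x).
  { intros t Ht. pose proof (Rabs_pos t). unfold f'.
    destruct (Req_dec t 0) as [->|Ht0].
    - replace (dphi 0 - dphi 0 - c * 0) with 0 by ring. rewrite Rabs_R0. nra.
    - specialize (Hdel t Ht0 ltac:(lra)). rewrite Rplus_0_l in Hdel.
      replace (dphi t - dphi 0 - c * t) with (t * ((dphi t - dphi 0) / t - c)) by (field; auto).
      rewrite Rabs_mult. nra. }
  destruct (MVT_abs f f' 0 x) as [t [Hmvt Ht]].
  { intros t Ht. apply Rabs_le_of_between in Ht.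
    replace (f' t) with (dphi t - (dphi 0 * 1 + c / 2 * (1 * id t + id t * 1)))
      by (unfold f', id; cbv beta; field).
    apply derivable_pt_lim_minus; [apply Hphi; lra|].
    apply derivable_pt_lim_plus.
    - apply derivable_pt_lim_scal, derivable_pt_lim_id.
    - apply derivable_pt_lim_scal, derivable_pt_lim_mult; apply derivable_pt_lim_id. }
  replace (phi x - (phi 0 + dphi 0 * x + c / 2 * x ^ 2)) with (f x - f 0) by (unfold f; ring).
  rewrite Hmvt, Rminus_0_r, <- pow2_abs.
  pose proof (Hf' t (Rabs_le_of_between x t Ht)). pose proof (Rabs_pos x). nra.
Qed.

Lemma taylor2_of_derivable2 phi dphi c r : 0 < r ->
  (forall t, Rabs t < r -> derivable_pt_lim phi t (dphi t)) ->
  derivable_pt_lim dphi 0 c ->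
  taylor2 phi (phi 0) (dphi 0) (c / 2).
Proof.
  intros Hr Hphi Hdphi.
  set (rho := fun x => if Req_EM_T x 0 then 0
                       else (phi x - (phi 0 + dphi 0 * x + c / 2 * x ^ 2)) / x ^ 2).
  assert (Hrho0 : rho 0 = 0) by (unfold rho; destruct Req_EM_T; [reflexivity | contradiction]).
  exists rho, 1; repeat split; [lra | | exact Hrho0 | ].
  - apply continuity_pt_zero_intro; auto. intros eps Heps.
    destruct (second_order_remainder_bound phi dphi c r Hr Hphi Hdphi (eps / 2))
      as [del [Hdel Hbound]]; [lra|].
    exists del; split; auto. intros x Hx0 Hx. unfold rho.
    destruct Req_EM_T; [contradiction|].
    assert (Hx2 : 0 < x ^ 2) by (rewrite <- pow2_abs; apply pow_lt, Rabs_pos_lt; auto).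
    unfold Rdiv. rewrite Rabs_mult, (Rabs_right (/ x ^ 2)) by (left; apply Rinv_0_lt_compat; auto).
    apply Rle_lt_trans with (eps / 2 * x ^ 2 * / x ^ 2).
    + apply Rmult_le_compat_r; [left; apply Rinv_0_lt_compat|]; auto.
    + field_simplify; lra.
  - intros x _. unfold rho. destruct Req_EM_T as [->|Hx0]; [ring | field; auto].
Qed.

Lemma taylor1_of_derivable phi l : derivable_pt_lim phi 0 l -> taylor1 phi (phi 0) l.
Proof.
  intros Hphi.
  set (sig := fun x => if Req_EM_T x 0 then 0 else (phi x - phi 0) / x - l).
  assert (Hsig0 : sig 0 = 0) by (unfold sig; destruct Req_EM_T; [reflexivity | contradiction]).
  exists sig, 1; repeat split; [lra | | exact Hsig0 | ].
  - apply continuity_pt_zero_intro; auto. intros eps Heps.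
    destruct (Hphi eps Heps) as [del Hdel].
    exists del; split; [apply cond_pos|]. intros x Hx0 Hx. unfold sig.
    destruct Req_EM_T; [contradiction|].
    specialize (Hdel x Hx0 Hx). rewrite Rplus_0_l in Hdel. exact Hdel.
  - intros x _. unfold sig. destruct Req_EM_T as [->|Hx0]; [ring | field; auto].
Qed.

Lemma derivable_pt_lim_shift f x0 t l : derivable_pt_lim f (x0 + t) l ->
  derivable_pt_lim (fun s => f (x0 + s)) t l.
Proof.
  intros Hf eps Heps. destruct (Hf eps Heps) as [del Hdel]. exists del.
  intros h Hh0 Hh. rewrite <- Rplus_assoc. apply Hdel; auto.
Qed.

Lemma taylor1_shift f x0 l : derivable_pt_lim f x0 l ->
  taylor1 (fun s => f (x0 + s)) (f x0) l.
Proof.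
  intros Hf. eapply taylor1_ext.
  - apply (taylor1_of_derivable (fun s => f (x0 + s))), derivable_pt_lim_shift.
    rewrite Rplus_0_r. exact Hf.
  - reflexivity.
  - rewrite Rplus_0_r. reflexivity.
  - reflexivity.
Qed.

Lemma taylor2_shift psi dpsi c x0 : 0 < x0 ->
  (forall x, 0 < x -> derivable_pt_lim psi x (dpsi x)) ->
  derivable_pt_lim dpsi x0 c ->
  taylor2 (fun s => psi (x0 + s)) (psi x0) (dpsi x0) (c / 2).
Proof.
  intros Hx0 Hpsi Hdpsi. eapply taylor2_ext.
  - apply (taylor2_of_derivable2 (fun s => psi (x0 + s)) (fun s => dpsi (x0 + s)) c x0 Hx0).
    + intros t Ht. apply derivable_pt_lim_shift, Hpsi. apply Rabs_def2 in Ht. lra.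
    + apply derivable_pt_lim_shift. rewrite Rplus_0_r. exact Hdpsi.
  - reflexivity.
  - rewrite Rplus_0_r. reflexivity.
  - rewrite Rplus_0_r. reflexivity.
  - reflexivity.
Qed.

Lemma concave_second_derivative_nonpos psi dpsi c x0 : concave_pos psi -> 0 < x0 ->
  (forall x, 0 < x -> derivable_pt_lim psi x (dpsi x)) ->
  derivable_pt_lim dpsi x0 c -> c <= 0.
Proof.
  intros Hconc Hx0 Hpsi Hdpsi.
  pose proof (taylor2_shift psi dpsi c x0 Hx0 Hpsi Hdpsi) as Hright.
  pose proof (taylor2_comp _ _ _ _ _ _ _ _ Hright (taylor2_poly x0 (-1) 0)) as Hleft.
  assert (Hdefect : taylor2 (fun e => 2 * psi x0 - psi (x0 + e) - psi (x0 - e)) 0 0 (- c)).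
  { eapply taylor2_ext.
    - apply taylor2_minus; [apply taylor2_minus; [apply taylor2_const | exact Hright] |].
      exact Hleft.
    - intros e; cbv beta. replace (x0 + -1 * e + 0 * e ^ 2) with (x0 - e) by ring.
      reflexivity.
    - ring.
    - ring.
    - field. }
  enough (0 <= - c) by lra.
  apply (taylor2_leading_coef_nonneg _ _ Hdefect). exists x0; split; auto.
  intros e He. apply Rabs_def2 in He.
  pose proof (Hconc (x0 + e) (x0 - e) (/ 2) ltac:(lra) ltac:(lra) ltac:(lra)) as Hmid.
  replace (/ 2 * (x0 + e) + (1 - / 2) * (x0 - e)) with x0 in Hmid by field. lra.
Qed.

Lemma taylor2_sumV G (F : nat -> R -> R) A B C :
  (forall w, taylor2 (F w) (A w) (B w) (C w)) ->
  taylor2 (fun e => sumV G (fun w => F w e)) (sumV G A) (sumV G B) (sumV G C).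
Proof.
  intros HF. unfold sumV. induction (seq 0 (nV G)) as [|z l IH]; simpl.
  - apply taylor2_const.
  - exact (taylor2_plus _ _ _ _ _ _ _ _ (HF z) IH).
Qed.

Lemma taylor2_Lap G v (F : nat -> R -> R) A B C :
  (forall w, taylor2 (F w) (A w) (B w) (C w)) ->
  taylor2 (fun e => Lap G (fun w => F w e) v) (Lap G A v) (Lap G B v) (Lap G C v).
Proof.
  intros HF. apply (taylor2_sumV G (fun w e => if adj G v w then F w e - F v e else 0)).
  intros w. destruct (adj G v w).
  - apply taylor2_minus; apply HF.
  - apply taylor2_const.
Qed.

Lemma Lap_affine2 G v (F X Y : nat -> R) kx ky k0 :
  (forall w, F w = kx * X w + ky * Y w + k0) ->
  Lap G F v = kx * Lap G X v + ky * Lap G Y v.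
Proof.
  intros HF. unfold Lap, sumV. induction (seq 0 (nV G)) as [|z l IH]; simpl; [ring|].
  rewrite IH, !HF. destruct (adj G v z); ring.
Qed.

Lemma Lap_affine G v (F X : nat -> R) k k0 :
  (forall w, F w = k * X w + k0) -> Lap G F v = k * Lap G X v.
Proof.
  intros HF. rewrite (Lap_affine2 G v F X X k 0 k0) by (intros; rewrite HF; ring). ring.
Qed.

Lemma Lap_mul_diff G v (f h : nat -> R) :
  Lap G (fun w => (f w - f v) * (h w - h v)) v = 2 * Gam G f h v.
Proof.
  unfold Gam, Lap, sumV. induction (seq 0 (nV G)) as [|z l IH]; simpl; [field|].
  rewrite IH. destruct (adj G v z); field.
Qed.

Definition perturb (g : nat -> R) (e : R) : nat -> R := fun w => 1 + e * g w.

Lemma perturb_pos (g : nat -> R) (n : nat) : exists del, 0 < del /\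
  forall e, Rabs e < del -> forall w, (w < n)%nat -> 0 < perturb g e w.
Proof.
  induction n as [|n [del [Hdel Hpos]]].
  - exists 1; split; [lra|]. intros; lia.
  - exists (Rmin del (/ (Rabs (g n) + 1))). split.
    + apply Rmin_pos; auto. apply Rinv_0_lt_compat. pose proof (Rabs_pos (g n)). lra.
    + intros e He w Hw. apply Rmin_Rgt_l in He as [He1 He2].
      destruct (Nat.eq_dec w n) as [->|Hwn].
      * apply one_plus_mul_pos; auto.
      * apply Hpos; auto. lia.
Qed.

Section Perturbation.

Variables (psi dpsi ddpsi : R -> R) (G : graph) (g : nat -> R).
Hypothesis psi_derivable : forall x, 0 < x -> derivable_pt_lim psi x (dpsi x).
Hypothesis dpsi_derivable_1 : derivable_pt_lim dpsi 1 (ddpsi 1).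

Let a := dpsi 1.
Let b := ddpsi 1.
Let Lg := Lap G g.

Lemma Lap_perturb e w : Lap G (perturb g e) w = e * Lg w.
Proof. apply (Lap_affine G w _ g e 1). intros; unfold perturb; ring. Qed.

Lemma taylor2_perturb_ratio w z :
  taylor2 (fun e => perturb g e z / perturb g e w) 1 (g z - g w) (- g w * (g z - g w)).
Proof.
  eapply taylor2_ext.
  - apply taylor2_mult; [apply (taylor2_poly 1 (g z) 0) | apply (taylor2_inv_affine (g w))].
  - intros e; cbv beta; unfold perturb, Rdiv; ring.
  - ring.
  - ring.
  - ring.
Qed.

Lemma taylor2_psi_perturb_ratio w z :
  taylor2 (fun e => psi (perturb g e z / perturb g e w)) (psi 1) (a * (g z - g w))
    (a * (- g w * (g z - g w)) + b / 2 * (g z - g w) ^ 2).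
Proof.
  apply (taylor2_comp psi _ 1).
  - apply taylor2_shift; auto. lra.
  - apply taylor2_perturb_ratio.
Qed.

Lemma taylor1_dpsi_perturb_ratio v w :
  taylor1 (fun e => dpsi (perturb g e w / perturb g e v)) a (b * (g w - g v)).
Proof.
  apply (taylor1_comp dpsi _ 1).
  - apply taylor1_shift, dpsi_derivable_1.
  - apply (taylor1_of_taylor2 _ _ _ _ (taylor2_perturb_ratio v w)).
Qed.

Lemma taylor2_Lappsi_perturb w :
  taylor2 (fun e => Lappsi G psi (perturb g e) w) 0 (a * Lg w)
    (- a * g w * Lg w + b * Gam1 G g w).
Proof.
  eapply taylor2_ext.
  - apply (taylor2_Lap G w (fun z e => psi (perturb g e z / perturb g e w))).
    intros z; apply taylor2_psi_perturb_ratio.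
  - reflexivity.
  - rewrite (Lap_affine G w _ g 0 (psi 1)) by (intros; ring). ring.
  - apply (Lap_affine G w _ g a (- a * g w)). intros; ring.
  - rewrite (Lap_affine2 G w _ g (fun z => (g z - g w) * (g z - g w)) (- a * g w) (b / 2)
      (a * g w ^ 2)) by (intros; cbv beta; ring).
    rewrite Lap_mul_diff. unfold Gam1, Lg. field.
Qed.

Lemma taylor2_Lap_div_perturb w :
  taylor2 (fun e => Lap G (perturb g e) w / perturb g e w) 0 (Lg w) (- g w * Lg w).
Proof.
  eapply taylor2_ext.
  - apply taylor2_mult; [apply (taylor2_poly 0 (Lg w) 0) | apply (taylor2_inv_affine (g w))].
  - intros e; cbv beta. rewrite Lap_perturb. unfold perturb, Rdiv. ring.
  - ring.
  - ring.
  - ring.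
Qed.

Lemma taylor2_Omegapsi_perturb v :
  taylor2 (fun e => Omegapsi G dpsi (perturb g e) v) 0 (a * Lap G Lg v)
    (- a * Lap G (fun w => g w * Lg w) v + 2 * (a + b) * Gam G g Lg v).
Proof.
  eapply taylor2_ext.
  - apply (taylor2_Lap G v (fun w e =>
      dpsi (perturb g e w / perturb g e v) * (perturb g e w / perturb g e v) *
      (Lap G (perturb g e) w / perturb g e w - Lap G (perturb g e) v / perturb g e v))).
    intros w. apply taylor2_mult_taylor1.
    + apply taylor1_mult; [apply taylor1_dpsi_perturb_ratio |].
      apply (taylor1_of_taylor2 _ _ _ _ (taylor2_perturb_ratio v w)).
    + eapply taylor2_ext; [apply taylor2_minus; apply taylor2_Lap_div_perturb | reflexivity | ..].
      * ring.
      * reflexivity.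
      * reflexivity.
  - reflexivity.
  - rewrite (Lap_affine G v _ g 0 0) by (intros; ring). ring.
  - apply (Lap_affine G v _ Lg a (- a * Lg v)). intros; ring.
  - rewrite (Lap_affine2 G v _ (fun w => g w * Lg w) (fun w => (g w - g v) * (Lg w - Lg v))
      (- a) (a + b) (a * g v * Lg v)) by (intros; cbv beta; ring).
    rewrite Lap_mul_diff. ring.
Qed.

Lemma taylor2_Lap_mul_Lappsi_div v :
  taylor2 (fun e => Lap G (perturb g e) v * Lappsi G psi (perturb g e) v / perturb g e v)
    0 0 (a * Lg v * Lg v).
Proof.
  eapply taylor2_ext.
  - apply taylor2_mult; [apply taylor2_mult |].
    + apply (taylor2_poly 0 (Lg v) 0).
    + apply (taylor2_Lappsi_perturb v).
    + apply (taylor2_inv_affine (g v)).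
  - intros e; cbv beta. rewrite Lap_perturb. unfold perturb, Rdiv. ring.
  - ring.
  - ring.
  - ring.
Qed.

Lemma taylor2_Lap_perturb_mul_Lappsi v :
  taylor2 (fun e => Lap G (fun w => perturb g e w * Lappsi G psi (perturb g e) w) v)
    0 (a * Lap G Lg v) (b * Lap G (Gam1 G g) v).
Proof.
  eapply taylor2_ext.
  - apply (taylor2_Lap G v (fun w e => perturb g e w * Lappsi G psi (perturb g e) w)).
    intros w. eapply taylor2_ext.
    + apply taylor2_mult; [apply (taylor2_poly 1 (g w) 0) | apply (taylor2_Lappsi_perturb w)].
    + intros e; cbv beta. unfold perturb. ring.
    + reflexivity.
    + reflexivity.
    + reflexivity.
  - reflexivity.
  - rewrite (Lap_affine G v _ g 0 0) by (intros; ring). ring.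
  - apply (Lap_affine G v _ Lg a 0). intros; ring.
  - apply (Lap_affine G v _ (Gam1 G g) b 0). intros; ring.
Qed.

Lemma taylor2_Gamma2psi_perturb v :
  taylor2 (fun e => Gamma2psi G psi dpsi (perturb g e) v) 0 0 (- b * Gamma2 G g v).
Proof.
  eapply taylor2_ext.
  - apply (taylor2_scal (/ 2)), taylor2_minus; [apply taylor2_plus |].
    + apply (taylor2_Omegapsi_perturb v).
    + apply (taylor2_Lap_mul_Lappsi_div v).
    + apply taylor2_mult; [apply (taylor2_Lap_perturb_mul_Lappsi v) |].
      apply (taylor2_inv_affine (g v)).
  - intros e; cbv beta. unfold Gamma2psi, perturb, Rdiv. reflexivity.
  - ring.
  - ring.
  - unfold Gamma2, Gam, Lg. field.
Qed.

Lemma taylor2_CDpsi_defect d v :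
  taylor2 (fun e => Gamma2psi G psi dpsi (perturb g e) v
                    - / d * Lappsi G psi (perturb g e) v ^ 2)
    0 0 (- b * Gamma2 G g v - / d * (a * Lg v) ^ 2).
Proof.
  eapply taylor2_ext.
  - apply taylor2_minus; [apply (taylor2_Gamma2psi_perturb v) |].
    apply (taylor2_scal (/ d)), taylor2_mult; apply (taylor2_Lappsi_perturb v).
  - intros e; cbv beta. ring.
  - ring.
  - ring.
  - ring.
Qed.

End Perturbation.

Theorem mainTheorem6 (psi dpsi ddpsi : R -> R) (d : R) (G : graph) :
  C2_pos psi dpsi ddpsi ->
  concave_pos psi ->
  ddpsi 1 <> 0 -> dpsi 1 <> 0 ->
  0 < d ->
  CDpsi G psi dpsi d ->
  CD G (- ddpsi 1 / (dpsi 1) ^ 2 * d).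
Proof.
  intros [Hpsi [Hdpsi _]] Hconc Hb Ha Hd HCD g v Hv.
  pose proof (Hdpsi 1 ltac:(lra)) as Hdpsi1.
  assert (Hb_neg : ddpsi 1 < 0).
  { pose proof (concave_second_derivative_nonpos psi dpsi _ 1 Hconc ltac:(lra) Hpsi Hdpsi1).
    lra. }
  assert (Hdefect : 0 <= - ddpsi 1 * Gamma2 G g v - / d * (dpsi 1 * Lap G g v) ^ 2).
  { apply (taylor2_leading_coef_nonneg _ _
      (taylor2_CDpsi_defect psi dpsi ddpsi G g Hpsi Hdpsi1 d v)).
    destruct (perturb_pos g (nV G)) as [del [Hdel Hpos]].
    exists del; split; auto. intros e He.
    pose proof (HCD (perturb g e) (Hpos e He) v Hv). lra. }
  apply Rle_ge.
  replace (/ (- ddpsi 1 / dpsi 1 ^ 2 * d) * Lap G g v ^ 2)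
    with (/ (- ddpsi 1) * (/ d * (dpsi 1 * Lap G g v) ^ 2)) by (field; repeat split; auto; lra).
  replace (Gamma2 G g v) with (/ (- ddpsi 1) * (- ddpsi 1 * Gamma2 G g v)) by (field; lra).
  apply Rmult_le_compat_l; [left; apply Rinv_0_lt_compat |]; lra.
Qed.
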